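(* For every $L$, every $\eta\in\Omega_{\bar\rho^{(L)}}$ and every $u\in\mathcal T_L$, $$\epsilon(u,\eta)=\frac12\Big[F(u+\hat e_3,\eta)-F(u,\eta)+\Delta H_\eta(u)\Big],$$ where $\Delta H_\eta(u)=\sum_{i=1}^2\big[H_\eta(u+\hat e_i)+H_\eta(u-\hat e_i)\big]-4H_\eta(u)$.
   Context: Let $\mathcal T$ be the triangular lattice with vertex set $\mathbb Z^2$, where $u$ is adjacent to $u\pm\hat e_i$, $i=1,2,3$, $\hat e_1=(1,0)$, $\hat e_2=(0,1)$, $\hat e_3=(-1,-1)$, and $\mathcal H$ its dual honeycomb lattice (vertices of $\mathcal T$ = hexagonal faces of $\mathcal H$). For $u\in\mathcal T$, $i\in\{1,2,3\}$, $b_i(u)$ is the edge of $\mathcal H$ crossed by the edge of $\mathcal T$ from $u$ to $u+\hat e_i$ (type-$i$ edge). $\mathcal H_L,\mathcal T_L$ are the quotients by $L\mathbb Z^2$. $\mathbb T$ is the open triangle with vertices $(0,0),(1,0),(0,1)$. For $\bar\rho^{(L)}\in\mathbb T$ with $L\bar\rho^{(L)}_i\in\mathbb N$, $\Omega_{\bar\rho^{(L)}}$ is the set of perfect matchings (dimer coverings) $\eta$ of $\mathcal H_L$ with exactly $L^2\bar\rho^{(L)}_i$ dimers of type $i$, $i=1,2$; $\bar\rho^{(L)}_3=1-\bar\rho^{(L)}_1-\bar\rho^{(L)}_2$. The height function $H_\eta$ on $\mathcal T_L$: $H_\eta(0,0)=0$, $H_\eta(u+\hat e_i)-H_\eta(u)=-\bar\rho^{(L)}_i+\mathbf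 1_{b_i(u)\in\eta}$, $i=1,2,3$. Define $\epsilon(u,\eta)=\mathbf 1_{\{b_1(u),b_2(u)\}\subset\eta}-\mathbf 1_{\{b_1(u-\hat e_1),b_2(u-\hat e_2)\}\subset\eta}\in\{-1,0,1\}$ and $F(u,\eta)=|\mathbf 1_{b_1(u)\in\eta}-\mathbf 1_{b_2(u)\in\eta}|$. *)

From mathcomp Require Import all_boot all_order all_algebra.
Set Implicit Arguments. Unset Strict Implicit. Unset Printing Implicit Defensive.
Import Order.TTheory GRing.Theory Num.Theory.
Local Open Scope ring_scope.

(* The torus side length is L = n.+1 (so L >= 1 ranges over all positive
   integers as n ranges over nat).  Vertices of T_L = Z^2 / L Z^2 are pairs of
   integers modulo L, represented in 'I_L (which is a Z-module mod L). *)
Definition vtx (n : nat) := ('I_n.+1 * 'I_n.+1)%type.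

Definition vadd n (u v : vtx n) : vtx n := (u.1 + v.1, u.2 + v.2).
Definition vsub n (u v : vtx n) : vtx n := (u.1 - v.1, u.2 - v.2).
Definition v0 n : vtx n := (0, 0).

(* Edge types: the paper's types 1,2,3 are the ordinals 0,1,2 of 'I_3. *)
Definition ty1 : 'I_3 := @Ordinal 3 0 isT.
Definition ty2 : 'I_3 := @Ordinal 3 1 isT.
Definition ty3 : 'I_3 := @Ordinal 3 2 isT.

Definition ehat n (i : 'I_3) : vtx n :=
  match val i with
  | 0 => (inZp 1, 0)
  | 1 => (0, inZp 1)
  | _ => (- inZp 1, - inZp 1)
  end.

(* Edges of the honeycomb H_L: b_i(u) is the honeycomb edge crossed by the
   triangular-lattice edge from u to u + hat e_i. *)
Definition hedge n := (vtx n * 'I_3)%type.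
Definition b n (i : 'I_3) (u : vtx n) : hedge n := (u, i).

(* Vertices of H_L = triangular faces of T_L:
   (u, true)  is the triangle {u, u+e1, u+e1+e2},
   (u, false) is the triangle {u, u+e2, u+e1+e2}. *)
Definition hvtx n := (vtx n * bool)%type.

Definition hedges_at n (h : hvtx n) : seq (hedge n) :=
  let u := h.1 in
  let u12 := vadd (vadd u (ehat n ty1)) (ehat n ty2) in
  if h.2 then [:: b ty1 u; b ty2 (vadd u (ehat n ty1)); b ty3 u12]
  else [:: b ty2 u; b ty1 (vadd u (ehat n ty2)); b ty3 u12].

Definition incident n (h : hvtx n) (e : hedge n) : bool := e \in hedges_at h.

Definition perfect_matching n (eta : {set hedge n}) : Prop :=
  forall h : hvtx n, #|[set e in eta | incident h e]| = 1%N.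

Definition ndimers n (eta : {set hedge n}) (i : 'I_3) : nat :=
  #|[set u : vtx n | b i u \in eta]|.

Definition admissible_density (R : realFieldType) (n : nat) (rho1 rho2 : R) : Prop :=
  [/\ 0 < rho1, 0 < rho2, rho1 + rho2 < 1,
      exists k : nat, n.+1%:R * rho1 = k%:R &
      exists k : nat, n.+1%:R * rho2 = k%:R].

Definition rho (R : realFieldType) (rho1 rho2 : R) (i : 'I_3) : R :=
  match val i with
  | 0 => rho1
  | 1 => rho2
  | _ => 1 - rho1 - rho2
  end.

Definition Omega (R : realFieldType) n (rho1 rho2 : R) (eta : {set hedge n}) : Prop :=
  [/\ perfect_matching eta,
      (ndimers eta ty1)%:R = (n.+1 ^ 2)%:R * rho1 &
      (ndimers eta ty2)%:R = (n.+1 ^ 2)%:R * rho2 :> R].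

Definition is_height (R : realFieldType) n (rho1 rho2 : R) (eta : {set hedge n})
  (H : vtx n -> R) : Prop :=
  H (v0 n) = 0 /\
  forall (u : vtx n) (i : 'I_3),
    H (vadd u (ehat n i)) - H u = - rho rho1 rho2 i + (b i u \in eta)%:R.

Definition epsilon (R : realFieldType) n (eta : {set hedge n}) (u : vtx n) : R :=
  ((b ty1 u \in eta) && (b ty2 u \in eta))%:R
  - ((b ty1 (vsub u (ehat n ty1)) \in eta) && (b ty2 (vsub u (ehat n ty2)) \in eta))%:R.

Definition Fdef (R : realFieldType) n (eta : {set hedge n}) (u : vtx n) : R :=
  `| (b ty1 u \in eta)%:R - (b ty2 u \in eta)%:R |.

Definition laplacian (R : realFieldType) n (H : vtx n -> R) (u : vtx n) : R :=
  H (vadd u (ehat n ty1)) + H (vsub u (ehat n ty1))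
  + (H (vadd u (ehat n ty2)) + H (vsub u (ehat n ty2))) - 4 * H u.

(* Only the local structure around u matters.  Put w := u + e3.  The two
   triangles of T_L with lowest corner w share the side crossed by b_3(u); the
   other sides of the first are crossed by b_1(w), b_2(u - e2), those of the
   second by b_2(w), b_1(u - e1).  In a perfect matching exactly one side of
   each triangle is crossed by a dimer.
   Along e1 and e2 the densities in the increments of H cancel in the
   Laplacian, which is therefore the sum of the two differences
   1[b_i(u)] - 1[b_i(u - e_i)], i = 1, 2.  The identity is then a check over
   the finitely many admissible local configurations of the seven edges. *)

From mathcomp Require Import all_boot all_order all_algebra.
From mathcomp Require Import lra.
Set Implicit Arguments. Unset Strict Implicit.
Import Order.TTheory GRing.Theory Num.Theory.
Local Open Scope ring_scope.

Lemma vsubK n (e u : vtx n) : vadd (vsub u e) e = u.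
Proof. by case: u e => [a b] [c d]; rewrite /vadd /vsub /= !subrK. Qed.

Lemma vadd_e3_e1 n (u : vtx n) :
  vadd (vadd u (ehat n ty3)) (ehat n ty1) = vsub u (ehat n ty2).
Proof. by case: u => a b; rewrite /vadd /vsub /ehat /= addr0 subr0 subrK. Qed.

Lemma vadd_e3_e2 n (u : vtx n) :
  vadd (vadd u (ehat n ty3)) (ehat n ty2) = vsub u (ehat n ty1).
Proof. by case: u => a b; rewrite /vadd /vsub /ehat /= addr0 subr0 subrK. Qed.

Lemma card_setI_uniq (T : finType) (A : {set T}) (s : seq T) : uniq s ->
  #|[set x in A | x \in s]| = count (mem A) s.
Proof.
move=> s_uniq; rewrite -size_filter -(card_uniqP (filter_uniq _ s_uniq)).
by apply: eq_card => x; rewrite !inE mem_filter andbC.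
Qed.

Lemma perfect_matching_count n (eta : {set hedge n}) (h : hvtx n) :
  perfect_matching eta -> count (mem eta) (hedges_at h) = 1%N.
Proof.
move=> pm; rewrite -card_setI_uniq ?(pm h) //.
by case: h => v []; rewrite /hedges_at /b /= !inE !xpair_eqE /= !andbF.
Qed.

Lemma perfect_matching_faces n (eta : {set hedge n}) (u : vtx n) :
  let w := vadd u (ehat n ty3) in
  perfect_matching eta ->
  ((b ty1 w \in eta) + (b ty2 (vsub u (ehat n ty2)) \in eta)
     + (b ty3 u \in eta) = 1)%N /\
  ((b ty2 w \in eta) + (b ty1 (vsub u (ehat n ty1)) \in eta)
     + (b ty3 u \in eta) = 1)%N.
Proof.
move=> w pm.
have top : vadd (vadd w (ehat n ty1)) (ehat n ty2) = u by rewrite vadd_e3_e1 vsubK.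
have := perfect_matching_count (w, true) pm.
have := perfect_matching_count (w, false) pm.
by rewrite /hedges_at /= top vadd_e3_e1 vadd_e3_e2 /= !addn0 !addnA => -> ->.
Qed.

Lemma laplacian_height (R : realFieldType) n (rho1 rho2 : R)
    (eta : {set hedge n}) (H : vtx n -> R) (u : vtx n) :
  is_height rho1 rho2 eta H ->
  laplacian H u =
    ((b ty1 u \in eta)%:R - (b ty1 (vsub u (ehat n ty1)) \in eta)%:R)
    + ((b ty2 u \in eta)%:R - (b ty2 (vsub u (ehat n ty2)) \in eta)%:R).
Proof.
move=> [_ dH].
have := dH u ty1; have := dH u ty2.
have := dH (vsub u (ehat n ty1)) ty1; have := dH (vsub u (ehat n ty2)) ty2.
rewrite !vsubK /laplacian; lra.
Qed.

(* [a], [b]: b_1(u), b_2(u); [p], [q]: b_1(u - e1), b_2(u - e2);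
   [x], [y]: b_1(w), b_2(w); [c]: b_3(u). *)
Lemma dimer_local_identity (R : realFieldType) (a b p q x y c : bool) :
  (x + q + c = 1)%N -> (y + p + c = 1)%N ->
  ((a && b)%:R - (p && q)%:R : R) =
  2^-1 * (`|x%:R - y%:R| - `|a%:R - b%:R| + ((a%:R - p%:R) + (b%:R - q%:R))).
Proof.
by case: a b p q x y c => [] [] [] [] [] [] [] //= _ _;
  rewrite ?subrr ?subr0 ?sub0r ?normrN ?normr1 ?normr0; lra.
Qed.

Theorem lemma1 (R : realFieldType) (n : nat) (rho1 rho2 : R)
  (eta : {set hedge n}) (H : vtx n -> R) :
  admissible_density n rho1 rho2 ->
  Omega rho1 rho2 eta ->
  is_height rho1 rho2 eta H ->
  forall u : vtx n,
    epsilon R eta u =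
    2^-1 * (Fdef R eta (vadd u (ehat n ty3)) - Fdef R eta u + laplacian H u).
Proof.
move=> _ [pm _ _] height u.
have [face1 face2] := perfect_matching_faces u pm.
rewrite (laplacian_height u height) /epsilon /Fdef.
exact: dimer_local_identity face1 face2.
Qed.
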